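(* Let $(p,l)$ be an irregular pair with $\Delta_{(p,l)}\neq0$. Let $r\ge2$ be an integer and let $(p,s_1,\ldots,s_r)\in\widehat{\Psi}^{\rm irr}_r$ be the associated pair of the irregular pair of order $r$ corresponding to $(p,l)$. For $u\ge1$ let $(p,l_u)$ be the irregular pair of order $u$ corresponding to $(p,l)$, and let $A(p^u)=\min_{k\in\mathbb{N}_0}\{m=l_u+k\varphi(p^u): \operatorname{num}(B_m/m)/\operatorname{num}(B_m/(m(m-1)))=p^u\}$. If $(p,s_1,s_2,\ldots,s_r)\neq(p,l,l-1,\ldots,l-1)$, then $A(p^u)$ has no solution (the set is empty) for all $u\ge r$.
   Context: $B_n$ denotes the $n$-th Bernoulli number ($\frac{z}{e^z-1}=\sum_{n\ge0}B_n\frac{z^n}{n!}$); $\operatorname{num}(r)$ is the numerator of a rational number $r$ in lowest terms; $\varphi$ is Euler's function. For an odd prime $p$, $(p,l)$ is an irregular pair if $l$ is even, $2\le l\le p-3$ and $p\mid B_l$. For $n\ge1$, $(p,l)$ is an irregular pair of order $n$ if $l$ is even, $2\le l<\varphi(p^n)$ and $p^n\mid B_l/l$; the set of these is $\Psi^{\rm irr}_n$. For $(p,l)\in\Psi^{\rm irr}_n$ write $l=\sum_{\nu=1}^n s_\nu\varphi(p^{\nu-1})$ with $0\le s_\nu<p$; $(p,s_1,\ldots,s_n)$ is the associated pair and the set of these is $\widehat{\Psi}^{\rm irr}_n$. For an irregular pair $(p,l)$, $\Delta_{(p,l)}$ is the integer in $[0,p)$ with $\Delta_{(p,l)}\equiv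 p^{-1}\left(\frac{B_{l+\varphi(p)}}{l+\varphi(p)}-\frac{B_l}{l}\right)\pmod p$. Known fact (from earlier work): if $\Delta_{(p,l)}\neq0$, there is a unique sequence $(s_\nu)_{\nu\ge1}$ with $s_1=l$ and $(p,s_1,\ldots,s_n)\in\widehat{\Psi}^{\rm irr}_n$ for every $n\ge1$; the corresponding pair $(p,l_n)$ with $l_n=\sum_{\nu=1}^n s_\nu\varphi(p^{\nu-1})$ is the irregular pair of order $n$ corresponding to $(p,l)$. *)

From mathcomp Require Import all_boot all_order all_algebra.
Set Implicit Arguments. Unset Strict Implicit. Unset Printing Implicit Defensive.
Import Order.TTheory GRing.Theory Num.Theory.
Local Open Scope ring_scope.

(* Bernoulli numbers B_n (z/(e^z-1) convention, B_1 = -1/2), via the standard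
   recurrence  B_0 = 1,  B_n = -1/(n+1) * sum_{k<n} C(n+1,k) B_k. *)
Fixpoint bern_list (n : nat) : seq rat :=
  match n with
  | 0 => [:: 1]
  | n'.+1 => let s := bern_list n' in
      rcons s (- (n'.+2)%:R^-1 * \sum_(k < n'.+1) ('C(n'.+2, k))%:R * nth 0 s k)
  end.

Definition bernoulli (n : nat) : rat := nth 0 (bern_list n) n.

(* residue mod p (in [0,p)) of a rational with denominator prime to p,
   computed as num * den^(p-2) mod p (Fermat inverse) *)
Definition ratmodp (p : nat) (x : rat) : int :=
  ((numq x * (denq x) ^+ (p - 2)%N) %% p%:Z)%Z.

Definition irregular_pair (p l : nat) : Prop :=
  [/\ prime p, odd p, ~~ odd l, (2 <= l <= p - 3)%N
    & (p%:Z %| numq (bernoulli l))%Z].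

Definition irregular_pair_order (n p l : nat) : Prop :=
  [/\ prime p /\ odd p, (1 <= n)%N, ~~ odd l, (2 <= l < totient (p ^ n))%N
    & ((p ^ n)%N%:Z %| numq (bernoulli l / l%:R))%Z].

Definition lsum (p : nat) (s : nat -> nat) (n : nat) : nat :=
  (\sum_(1 <= nu < n.+1) s nu * totient (p ^ nu.-1))%N.

Definition assoc_pair_order (n p : nat) (s : nat -> nat) : Prop :=
  (forall nu, (1 <= nu <= n)%N -> (s nu < p)%N) /\
  irregular_pair_order n p (lsum p s n).

Definition Delta (p l : nat) : int :=
  ratmodp p ((bernoulli (l + (p - 1)) / (l + (p - 1))%:R
              - bernoulli l / l%:R) / p%:R).

Definition numratio (m : nat) : rat :=
  (numq (bernoulli m / m%:R))%:~R / (numq (bernoulli m / (m * (m - 1))%N%:R))%:~R.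

From mathcomp Require Import all_boot all_order all_algebra ring zify.
Import Order.TTheory GRing.Theory Num.Theory.
Set Implicit Arguments.
Unset Strict Implicit.
Unset Printing Implicit Defensive.

(* The ratio num(B_m/m) / num(B_m/(m(m-1))) divides m - 1, because the second
   fraction is the first one divided by m - 1.  So if it equals p^u for
   m = l_u + k phi(p^u), then p^(u-1) divides
     l_u - 1 = (l - 1) + sum_(2 <= nu <= u) s_nu (p - 1) p^(nu - 2).
   Reading this congruence modulo p, p^2, ..., and using that the s_nu are
   digits in [0, p), forces s_nu = l - 1 for 2 <= nu <= u.  The hypothesis
   Delta <> 0 only serves to produce the sequence s, which the statement
   supplies. *)

Section NumeratorRatio.
Local Open Scope ring_scope.

Lemma numq_div_nat_dvdn (x : rat) (c d : nat) :
  x != 0 -> numq x = d%:Z * numq (x / c%:R) -> (d %| c)%N.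
Proof.
set y := x / c%:R => x0 num_x.
have y0 : y != 0.
  by apply: contra x0 => /eqP y0; rewrite -numq_eq0 num_x y0 mulr0.
have c0 : c%:R != 0 :> rat by apply: contra y0 => /eqP c0; rewrite /y c0 invr0 mulr0.
have x_eq : x = y * c%:R by rewrite divfK.
have cross_num : numq x * denq y = numq y * c%:Z * denq x.
  apply: (@intr_inj rat); rewrite !rmorphM /= !numqE.
  by rewrite {1}x_eq; ring.
have cross : d%:Z * denq y = c%:Z * denq x.
  apply: (@mulfI _ (numq y)); first by rewrite numq_eq0.
  by rewrite mulrA [numq y * _]mulrC -num_x cross_num mulrA.
have cop : coprime d `|denq x|.
  have := coprime_num_den x; rewrite num_x abszM coprimeMl.
  by case/andP.
have := congr1 absz cross; rewrite !abszM /= => abs_cross.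
by rewrite -(Gauss_dvdl c cop) -abs_cross dvdn_mulr.
Qed.

Lemma numratio_dvdn (m d : nat) : (0 < d)%N -> numratio m = d%:R -> (d %| m.-1)%N.
Proof.
rewrite /numratio natrM invfM mulrA -subn1; set x := bernoulli m / m%:R.
move=> d_gt0 ratio_d.
have num_y0 : numq (x / (m - 1)%:R) != 0.
  apply/eqP=> num_y0; move: ratio_d; rewrite num_y0 invr0 mulr0 => /esym/eqP.
  by rewrite pnatr_eq0 eqn0Ngt d_gt0.
apply: (@numq_div_nat_dvdn x).
  rewrite -numq_eq0; apply/eqP=> num_x0; move: ratio_d.
  rewrite num_x0 mul0r => /esym/eqP.
  by rewrite pnatr_eq0 eqn0Ngt d_gt0.
apply: (@intr_inj rat); rewrite rmorphM /= -pmulrn -ratio_d divfK //.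
by rewrite intr_eq0.
Qed.

End NumeratorRatio.

Lemma dvdn_predD (a c d : nat) : 0 < a -> d %| c -> (d %| (a + c).-1) = (d %| a.-1).
Proof. by move=> a_gt0 d_c; rewrite -(prednK a_gt0) addSn /= dvdn_addl. Qed.

Lemma eq_digit_of_dvdn (p a b : nat) : a < p -> b < p -> p %| b * p.-1 + a -> b = a.
Proof.
move=> a_lt b_lt /dvdnP[q def_q].
have p_eq : p = p.-1.+1 by rewrite prednK // (leq_ltn_trans _ a_lt).
have split_bp : b * p + a = b * p.-1 + a + b by rewrite {1}p_eq mulnS; lia.
have := congr1 (modn^~ p) split_bp.
by rewrite def_q modnMDl -modnDml modnMl add0n !modn_small.
Qed.

Section LsumDigits.
Variables (p : nat) (s : nat -> nat).
Hypothesis p_prime : prime p.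

Lemma leq_lsum n : s 1 <= lsum p s n.+1.
Proof. by rewrite /lsum big_ltn // expn0 muln1 leq_addr. Qed.

Lemma lsum1 : lsum p s 1 = s 1.
Proof. by rewrite /lsum big_nat1 expn0 muln1. Qed.

Lemma lsumS n : lsum p s n.+2 = lsum p s n.+1 + s n.+2 * (p.-1 * p ^ n).
Proof. by rewrite /lsum big_nat_recr //= totient_pfactor. Qed.

Lemma lsum_pred_const_tail n : 0 < s 1 ->
    (forall j, 2 <= j <= n.+1 -> s j = (s 1).-1) ->
  (lsum p s n.+1).-1 = (s 1).-1 * p ^ n.
Proof.
move=> s1_gt0; elim: n => [|n IHn] tail.
  by rewrite lsum1 expn0 muln1.
have p_gt0 := prime_gt0 p_prime.
rewrite lsumS -(prednK (leq_trans s1_gt0 (leq_lsum n))) addSn /=.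
rewrite IHn => [|j /andP[j_ge2 j_le]]; last by apply: tail; rewrite j_ge2 ltnW.
have s_last : s n.+2 = (s 1).-1 by apply: tail; rewrite leqnn andbT.
rewrite s_last expnS; nia.
Qed.

Lemma const_tail_of_dvdn_lsum_pred n : 0 < s 1 ->
    (forall j, 1 <= j <= n.+1 -> s j < p) -> p ^ n %| (lsum p s n.+1).-1 ->
  forall j, 2 <= j <= n.+1 -> s j = (s 1).-1.
Proof.
move=> s1_gt0; elim: n => [|n IHn] digit_lt dvd_l j /andP[j_ge2 j_le]; first by lia.
have lsum_gt0 := leq_trans s1_gt0 (leq_lsum n).
have tail_n : forall i, 2 <= i <= n.+1 -> s i = (s 1).-1.
  apply: IHn => [i /andP[i_ge1 i_le]|]; first by apply: digit_lt; rewrite i_ge1 leqW.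
  have dvd_pn : p ^ n %| (lsum p s n.+2).-1.
    by apply: dvdn_trans dvd_l; rewrite dvdn_exp2l.
  by move: dvd_pn; rewrite lsumS dvdn_predD // mulnA dvdn_mull.
have s_last : s n.+2 = (s 1).-1.
  move: dvd_l; rewrite lsumS -(prednK lsum_gt0) addSn /= lsum_pred_const_tail //.
  have -> : (s 1).-1 * p ^ n + s n.+2 * (p.-1 * p ^ n)
          = p ^ n * (s n.+2 * p.-1 + (s 1).-1) by ring.
  rewrite expnS mulnC dvdn_pmul2l ?expn_gt0 ?prime_gt0 // => dvd_digit.
  apply: eq_digit_of_dvdn dvd_digit; last by apply: digit_lt; rewrite leqnn.
  by rewrite (leq_ltn_trans (leq_pred _)) // digit_lt.
by move: j_le; rewrite leq_eqVlt => /orP[/eqP -> // | j_lt]; apply: tail_n; rewrite j_ge2.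
Qed.

End LsumDigits.

Local Open Scope ring_scope.

Theorem corollary3p5 (p l r : nat) (s : nat -> nat) :
  irregular_pair p l ->
  Delta p l != 0 ->
  (2 <= r)%N ->
  s 1%N = l ->
  (forall n : nat, (1 <= n)%N -> assoc_pair_order n p s) ->
  (exists2 nu : nat, (2 <= nu <= r)%N & s nu <> l.-1) ->
  forall u : nat, (r <= u)%N ->
    ~ (exists k : nat,
         numratio (lsum p s u + k * totient (p ^ u))%N = ((p ^ u)%N)%:R).
Proof.
move=> [p_prime _ _ /andP[l_ge2 _] _] _ r_ge2 s1 assoc [nu /andP[nu_ge2 nu_le_r] s_nu].
case=> [|n] r_le_u [k ratio_pu]; first by lia.
have digit_lt j : (1 <= j -> s j < p)%N.
  by move=> j_ge1; case: (assoc j j_ge1) => lt _; apply: lt; rewrite j_ge1 leqnn.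
have s1_gt0 : (0 < s 1)%N by rewrite s1; lia.
have dvd_m : (p ^ n.+1 %| (lsum p s n.+1 + k * totient (p ^ n.+1)).-1)%N.
  by apply: numratio_dvdn ratio_pu; rewrite expn_gt0 prime_gt0.
have dvd_l : (p ^ n %| (lsum p s n.+1).-1)%N.
  have dvd_k : (p ^ n %| k * totient (p ^ n.+1))%N.
    by rewrite totient_pfactor // mulnA dvdn_mull.
  rewrite -(dvdn_predD (leq_trans s1_gt0 (leq_lsum p s n)) dvd_k).
  by apply: dvdn_trans dvd_m; rewrite dvdn_exp2l.
apply: s_nu; rewrite -s1; apply: (const_tail_of_dvdn_lsum_pred p_prime s1_gt0 _ dvd_l).
  by move=> j /andP[j_ge1 _]; apply: digit_lt.
by rewrite nu_ge2; lia.
Qed.
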